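(* Let $T$ be a p-string of length $n$. Suppose a node $v$ of $\mathrm{PPH}(T)$ has a reversed suffix link $\mathrm{rslink}(a,v)$ with $a\in\Sigma\cup\{0,\ldots,n-1\}$, and let $u$ be any ancestor of $v$. Then: - if $a\in\Sigma\cup\{0\}$, then $\mathrm{rslink}(a,u)$ is defined; - if $a\in\{1,\ldots,n-1\}$ and $|u|\ge a$, then $\mathrm{rslink}(a,u)$ is defined; - if $a\in\{1,\ldots,n-1\}$ and $|u|<a$, then $\mathrm{rslink}(0,u)$ is defined.
   Context: Let $\Sigma$ and $\Pi$ be disjoint alphabets. A p-string is a finite string over $\Sigma\cup\Pi$. For a string $S$, $S[i]$ is its $i$-th character, $S[i..j]$ is the substring from position $i$ to $j$ (empty if $j<i$), and $S[i..]=S[i..|S|]$. The previous encoding $\mathrm{prev}(S)$ of a p-string $S$ of length $n$ is the sequence of length $n$ defined by: - $\mathrm{prev}(S)[i]=S[i]$ if $S[i]\in\Sigma$; - $\mathrm{prev}(S)[i]=0$ if $S[i]\in\Pi$ does not occur in $S[1..i-1]$; - $\mathrm{prev}(S)[i]=i-j$ otherwise, where $j<i$ is the largest position with $S[j]=S[i]$. Sequence hash tree. Let $\langle S_1,\ldots,S_k\rangle$ be a sequence of strings with $S_1=\varepsilon$ and with $S_i$ not a prefix of $S_j$ for any $j<i$. Its sequence hash tree is built as follows. Start from a root representing $\varepsilon$. For $i=2,\ldots,k$, insert as a new node the shortest prefix $p_i$ of $S_i$ that is not yet a node. Attach it as a child of the longest prefix $q_i$ of $S_i$ that is already a node, via an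 edge labeled $S_i[|q_i|+1]$. The parameterized position heap $\mathrm{PPH}(T)$ is the sequence hash tree of $\langle\varepsilon,\mathrm{prev}(T[n..]),\ldots,\mathrm{prev}(T[1..])\rangle$. Each node is identified with the string of edge labels on the path from the root to it, and $|v|$ denotes its length. A string is represented by $\mathrm{PPH}(T)$ if it is spelled by a path from the root. Reversed suffix links. For a node $v$ and $a\in\Sigma\cup\{0,\ldots,n-1\}$, $\mathrm{rslink}(a,v)$ is defined as follows: - if $a\in\Sigma\cup\{0\}$ and $av$ is represented by $\mathrm{PPH}(T)$, then $\mathrm{rslink}(a,v)=av$; - if $a\in\{1,\ldots,n-1\}$, $v[a]=0$, and $0\,v[1..a-1]\,a\,v[a+1..|v|]$ is represented by $\mathrm{PPH}(T)$, then $\mathrm{rslink}(a,v)$ is that node; - otherwise $\mathrm{rslink}(a,v)$ is undefined. *)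

From mathcomp Require Import all_boot.
Set Implicit Arguments. Unset Strict Implicit. Unset Printing Implicit Defensive.

(* A p-string over disjoint alphabets Sigma (static symbols) and Pi
   (parameter symbols) is a sequence over the sum type Sigma + Pi
   (disjointness is built in).  Entries of prev-encodings live in
   Sigma + nat, the naturals standing for 0,1,2,...                        *)

Section PPH.
Variables (Sigma Pi : eqType).

Definition pchar := (Sigma + Pi)%type.
Definition plabel := (Sigma + nat)%type.

(* prev entry of character x, given the prefix pre = S[1..i-1] before it:
   x in Sigma -> x ; x in Pi not in pre -> 0 ;
   otherwise i - j where j is the last position of x in pre
   (= 1 + index of x in rev pre).                                          *)
Definition prev_entry (pre : seq pchar) (x : pchar) : plabel :=
  match x with
  | inl c => inl c
  | inr _ => if x \in pre then inr (index x (rev pre)).+1 else inr 0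
  end.

Fixpoint prev_aux (pre : seq pchar) (s : seq pchar) : seq plabel :=
  match s with
  | [::] => [::]
  | x :: s' => prev_entry pre x :: prev_aux (rcons pre x) s'
  end.

Definition prev (S : seq pchar) : seq plabel := prev_aux [::] S.

(* The tree is prefix-closed and each node is identified
   with the string spelled from the root, so the tree is represented by its
   set (list) of nodes; the parent of a node is its prefix of length one less,
   and the edge label is its last character.  Inserting S adds the shortest
   prefix of S that is not yet a node (nothing if every prefix is a node,
   which cannot happen under the hypotheses of a sequence hash tree).       *)
Definition sht_insert (nodes : seq (seq plabel)) (s : seq plabel)
  : seq (seq plabel) :=
  let k := find (fun k => take k s \notin nodes) (iota 0 (size s).+1) in
  if k < (size s).+1 then rcons nodes (take k s) else nodes.

Definition sht (ss : seq (seq plabel)) : seq (seq plabel) :=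
  foldl sht_insert [:: [::]] ss.

(* PPH(T) = sequence hash tree of <eps, prev(T[n..]), ..., prev(T[1..])>;
   T[i..] = drop (i-1) T, for i = n, n-1, ..., 1.                          *)
Definition PPH (T : seq pchar) : seq (seq plabel) :=
  sht [seq prev (drop (size T - 1 - k) T) | k <- iota 0 (size T)].

(* a string is represented by PPH(T) iff it is spelled by a path from the
   root, i.e. iff it is a node *)
Definition represented (T : seq pchar) (w : seq plabel) : bool :=
  w \in PPH T.

(* v[a] for 1-based a, as an option (None if a = 0 or a > |v|) *)
Definition nth1 (v : seq plabel) (a : nat) : option plabel :=
  if (0 < a) && (a <= size v) then Some (nth (inr 0) v a.-1) else None.

Definition rslink (T : seq pchar) (a : plabel) (v : seq plabel)
  : option (seq plabel) :=
  match a with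
  | inl c => if represented T (inl c :: v) then Some (inl c :: v) else None
  | inr 0 => if represented T (inr 0 :: v) then Some (inr 0 :: v) else None
  | inr k =>
      let w := inr 0 :: take k.-1 v ++ inr k :: drop k v in
      if (k <= (size T).-1) && (nth1 v k == Some (inr 0)) && represented T w
      then Some w else None
  end.

Definition defined (o : option (seq plabel)) : bool := o != None.

End PPH.

From mathcomp Require Import all_boot.
Set Implicit Arguments. Unset Strict Implicit. Unset Printing Implicit Defensive.

(* Inserting the shortest missing prefix keeps the node set of a sequence hash
   tree prefix-closed.  For an ancestor u of v, the string that witnesses
   rslink(a, u) is a prefix of the one witnessing rslink(a, v): for a in
   Sigma + {0} and for a <= |u| the edit made to v happens inside u, while for
   a > |u| the string 0u is already a prefix of 0 v[1..a-1] a v[a+1..]. *)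

Section PrefixClosed.
Variable X : eqType.

Definition prefix_closed (ns : seq (seq X)) : Prop :=
  {in ns, forall w j, take j w \in ns}.

Lemma mem_prefix_closed ns p w :
  prefix_closed ns -> prefix p w -> w \in ns -> p \in ns.
Proof. by move=> ns_closed; rewrite prefixE => /eqP <- /ns_closed. Qed.

End PrefixClosed.

Section HashTree.
Variable Sigma : eqType.

Lemma sht_insert_prefix_closed (ns : seq (seq (plabel Sigma))) s :
  prefix_closed ns -> prefix_closed (sht_insert ns s).
Proof.
move=> ns_closed; rewrite /sht_insert; set k := find _ _.
have take_lt_k j : j < k -> take j s \in ns.
  move=> lt_jk; have lt_j_size : j < (size s).+1.
    by apply: leq_trans lt_jk _; rewrite -[X in _ <= X](size_iota 0) find_size.
  by move: (before_find 0 lt_jk); rewrite nth_iota // add0n => /negbFE.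
clearbody k; case: ifP => _ //.
move=> w; rewrite mem_rcons inE => /predU1P[-> j | w_ns j]; rewrite mem_rcons inE.
  have [lt_jk | le_kj] := ltnP j k; last by rewrite take_taker ?eqxx.
  by rewrite take_takel ?take_lt_k ?orbT // ltnW.
by rewrite ns_closed ?orbT.
Qed.

Lemma sht_prefix_closed (ss : seq (seq (plabel Sigma))) : prefix_closed (sht ss).
Proof.
rewrite /sht; have : prefix_closed [:: [::] : seq (plabel Sigma)].
  by move=> w; rewrite inE => /eqP -> j.
elim: ss [:: [::]] => [|s ss IHss] ns //= ns_closed.
exact/IHss/sht_insert_prefix_closed.
Qed.

End HashTree.

Section ReversedSuffixLinks.
Variables (Sigma Pi : eqType) (T : seq (pchar Sigma Pi)).

Lemma represented_prefix (p w : seq (plabel Sigma)) :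
  prefix p w -> represented T w -> represented T p.
Proof. exact/mem_prefix_closed/sht_prefix_closed. Qed.

Lemma represented_cons_prefix x (u v : seq (plabel Sigma)) :
  prefix u v -> represented T (x :: v) -> represented T (x :: u).
Proof. by move=> uv; apply: represented_prefix; rewrite prefix_cons eqxx. Qed.

Lemma nth1_catl (u s : seq (plabel Sigma)) k :
  k <= size u -> nth1 (u ++ s) k = nth1 u k.
Proof.
move=> le_ku; rewrite /nth1 size_cat (leq_trans le_ku (leq_addr _ _)) le_ku.
by case: k le_ku => // k lt_ku; rewrite nth_cat lt_ku.
Qed.

Lemma prefix_drop_cat n (u s : seq (plabel Sigma)) :
  prefix (drop n u) (drop n (u ++ s)).
Proof.
rewrite drop_cat; case: ltnP => [_ | le_un]; first exact: prefix_prefix.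
by rewrite drop_oversize ?prefix0s.
Qed.

Lemma rslink_inl_prefix c (u v : seq (plabel Sigma)) :
  prefix u v -> defined (rslink T (inl c) v) -> defined (rslink T (inl c) u).
Proof.
by rewrite /defined /=; case: ifP => // /[swap] uv /(represented_cons_prefix uv) ->.
Qed.

Lemma rslink_0_prefix (u v : seq (plabel Sigma)) :
  prefix u v -> defined (rslink T (inr 0) v) -> defined (rslink T (inr 0) u).
Proof.
by rewrite /defined /=; case: ifP => // /[swap] uv /(represented_cons_prefix uv) ->.
Qed.

Lemma rslink_inr_prefix_long k (u v : seq (plabel Sigma)) :
  prefix u v -> k <= size u ->
  defined (rslink T (inr k) v) -> defined (rslink T (inr k) u).
Proof.
case: k => [|k]; first by move=> uv _; apply: rslink_0_prefix.
move=> /prefixP[s ->] lt_ku; rewrite /defined /= nth1_catl //.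
case: ifP => // /andP[-> w_repr] _; apply/negP; rewrite ifT //.
apply: represented_prefix w_repr; rewrite prefix_cons eqxx /=.
rewrite takel_cat 1?ltnW // prefix_catr // eqxx prefix_cons eqxx.
exact: prefix_drop_cat.
Qed.

Lemma rslink_inr_prefix_short k (u v : seq (plabel Sigma)) :
  prefix u v -> size u < k ->
  defined (rslink T (inr k) v) -> defined (rslink T (inr 0) u).
Proof.
case: k => [|k] // /prefixP[s ->] le_uk; rewrite /defined /=.
case: ifP => // /andP[_ w_repr] _; apply/negP; rewrite ifT //.
apply: represented_cons_prefix w_repr.
by rewrite take_cat ltnNge -ltnS le_uk -catA prefix_prefix.
Qed.

End ReversedSuffixLinks.

Theorem proposition1 (Sigma Pi : eqType) (T : seq (pchar Sigma Pi))
    (a : plabel Sigma) (v u : seq (plabel Sigma)) :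
  v \in PPH T ->
  (match a with inl _ => true | inr k => k <= (size T).-1 end) ->
  defined (rslink T a v) ->
  prefix u v ->
  (forall c : Sigma, a = inl c -> defined (rslink T (inl c) u)) /\
  (a = inr 0 -> defined (rslink T (inr 0) u)) /\
  (forall k : nat, a = inr k -> 1 <= k <= (size T).-1 -> k <= size u ->
     defined (rslink T (inr k) u)) /\
  (forall k : nat, a = inr k -> 1 <= k <= (size T).-1 -> size u < k ->
     defined (rslink T (inr 0) u)).
Proof.
move=> _ _ link_v uv; split; [|split; [|split]].
- by move=> c a_c; rewrite a_c in link_v; apply: rslink_inl_prefix link_v.
- by move=> a_0; rewrite a_0 in link_v; apply: rslink_0_prefix link_v.
- by move=> k a_k _ le_ku; rewrite a_k in link_v; apply: rslink_inr_prefix_long link_v.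
- by move=> k a_k _ lt_uk; rewrite a_k in link_v; apply: rslink_inr_prefix_short link_v.
Qed.
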